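(* Let $H,K$ be $n$-Hilbert spaces, fix $a_2,\dots,a_n\in H$, $b_2,\dots,b_n\in K$, $C_1\in\mathcal{GB}(H_F)$, $C_2\in\mathcal{GB}(K_G)$. Let $\{f_i\}_{i=1}^\infty$ be a $C_1$-controlled frame associated to $(a_2,\dots,a_n)$ for $H$ with bounds $A,B$ and $\{g_i\}_{i=1}^\infty$ a $C_2$-controlled frame associated to $(b_2,\dots,b_n)$ for $K$ with bounds $C,D$. Suppose that for each $f\in H_F$ and $g\in K_G$: (i) $\sum_{i=1}^\infty\langle f,f_i|a_2,\dots,a_n\rangle_1\langle C_2g_i,g|b_2,\dots,b_n\rangle_2=0$, and (ii) $\sum_{i=1}^\infty\langle g,g_i|b_2,\dots,b_n\rangle_2\langle C_1f_i,f|a_2,\dots,a_n\rangle_1=0$. Then $\{f_i\oplus g_i\}_{i=1}^\infty$ is a $(C_1\oplus C_2)$-controlled frame associated to $(a_2\oplus b_2,\dots,a_n\oplus b_n)$ for $H\oplus K$.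
   Context: Let $n\ge2$. For a complex $n$-Hilbert space $H$ with $n$-inner product $\langle\cdot,\cdot|\cdot,\dots,\cdot\rangle_1$ and $n$-norm $\|x_1,\dots,x_n\|_1=\langle x_1,x_1|x_2,\dots,x_n\rangle_1^{1/2}$, and fixed $a_2,\dots,a_n\in H$, $F=\{a_2,\dots,a_n\}$: $\langle x,y\rangle_F=\langle x,y|a_2,\dots,a_n\rangle_1$ is a semi-inner product on $H$ inducing an inner product on $H/L_F$ ($L_F=\mathrm{span}\,F$); identifying $H/L_F$ with an algebraic complement of $L_F$, $H_F$ is its Hilbert completion, with norm written $\|f,a_2,\dots,a_n\|_1$. Likewise $K$ with $\langle\cdot,\cdot|\cdot,\dots,\cdot\rangle_2$, $G=\{b_2,\dots,b_n\}$, Hilbert space $K_G$. $\mathcal{GB}(\cdot)$: bounded operators with bounded inverse. For $C\in\mathcal{GB}(H_F)$, $\{f_i\}\subseteq H$ is a $C$-controlled frame associated to $(a_2,\dots,a_n)$ for $H$ with bounds $A,B$ ($0<A\le B<\infty$) if $A\|f,a_2,\dots,a_n\|_1^2\le\sum_i\langle f,f_i|a_2,\dots,a_n\rangle_1\langle Cf_i,f|a_2,\dots,a_n\rangle_1\le B\|f,a_2,\dots,a_n\|_1^2$ for all $f\in H_F$ (similarly for $K$). The direct sum $H\oplus K$ is the $n$-Hilbert space with $n$-inner product $\langle f_1\oplus g_1,f_2\oplus g_2|f_3\oplus g_3,\dots,f_n\oplus g_n\rangle=\langle f_1,f_2|f_3,\dots,f_n\rangle_1+\langle g_1,g_2|g_3,\dots,g_n\rangle_2$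 and with $n$-norm defined by $\|f_1\oplus g_1,\dots,f_n\oplus g_n\|=\|f_1,\dots,f_n\|_1+\|g_1,\dots,g_n\|_2$. $C_1\oplus C_2$ acts on $H_F\oplus K_G$ by $(C_1\oplus C_2)(f\oplus g)=C_1f\oplus C_2g$. $\{f_i\oplus g_i\}$ is a $(C_1\oplus C_2)$-controlled frame associated to $(a_2\oplus b_2,\dots,a_n\oplus b_n)$ for $H\oplus K$ if there are $0<A'\le B'<\infty$ such that for all $f\in H_F$, $g\in K_G$: $A'\|f\oplus g,a_2\oplus b_2,\dots,a_n\oplus b_n\|^2\le\sum_i\langle f\oplus g,f_i\oplus g_i|a_2\oplus b_2,\dots,a_n\oplus b_n\rangle\langle(C_1\oplus C_2)(f_i\oplus g_i),f\oplus g|a_2\oplus b_2,\dots,a_n\oplus b_n\rangle\le B'\|f\oplus g,a_2\oplus b_2,\dots,a_n\oplus b_n\|^2$. *)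

From HB Require Import structures.
From mathcomp Require Import all_boot all_order all_algebra perm.
From mathcomp Require Import reals.
From mathcomp Require Import complex.
Set Implicit Arguments.
Unset Strict Implicit.
Unset Printing Implicit Defensive.
Import Order.TTheory GRing.Theory Num.Theory.
Local Open Scope ring_scope.
Local Open Scope complex_scope.

Section Defs.
Variable R : realType.
Local Notation C := R[i].

Definition series_to (u : nat -> C) (s : C) : Prop :=
  forall eps : R, 0 < eps -> exists N : nat, forall m : nat, (N <= m)%N ->
    `| \sum_(i < m) u i - s | < eps%:C.

Definition lin_indep (V : lmodType C) (k : nat) (w : 'I_k -> V) : Prop :=
  forall c : 'I_k -> C, \sum_(i < k) c i *: w i = 0 -> forall i, c i = 0.

(* the family (x, z_1, ..., z_{n-1}) *)
Definition consf (V : Type) (m : nat) (x : V) (z : 'I_m -> V) (i : 'I_m.+1) : V :=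
  match unlift ord0 i with None => x | Some j => z j end.

Definition replace_at (V : Type) (m : nat) (z : 'I_m -> V) (i : 'I_m) (x : V)
  (j : 'I_m) : V := if j == i then x else z j.

(* Misiak's axioms for an n-inner product on a complex vector space of dim >= n *)
Definition is_n_inner_product (n : nat) (V : lmodType C)
  (ip : V -> V -> ('I_n.-1 -> V) -> C) : Prop :=
  [/\ (exists w : 'I_n.-1.+1 -> V, lin_indep w),
      (forall x z, 0 <= ip x x z),
      (forall x z, ip x x z = 0 <-> ~ lin_indep (consf x z)),
      (forall x z i, ip x x z = ip (z i) (z i) (replace_at z i x)) &
      (forall x y z (s : {perm 'I_n.-1}), ip x y z = ip x y (fun j => z (s j)))] /\
  [/\
  (forall x y z, ip x y z = (ip y x z)^*),
      (forall (a : C) x y z, ip (a *: x) y z = a * ip x y z) &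
      (forall x x' y z, ip (x + x') y z = ip x y z + ip x' y z)].

Definition n_norm (n : nat) (V : Type) (ip : V -> V -> ('I_n.-1 -> V) -> C)
  (x : V) (z : 'I_n.-1 -> V) : R := Num.sqrt (complex.Re (ip x x z)).

Definition is_n_Hilbert (n : nat) (V : lmodType C)
  (ip : V -> V -> ('I_n.-1 -> V) -> C) : Prop :=
  is_n_inner_product ip /\
  forall x : nat -> V,
    (forall z eps, 0 < eps -> exists N, forall p q, (N <= p)%N -> (N <= q)%N ->
        n_norm ip (x p - x q) z < eps) ->
    exists l : V, forall z eps, 0 < eps -> exists N, forall p, (N <= p)%N ->
        n_norm ip (x p - l) z < eps.

Definition is_inner_product (X : lmodType C) (ip : X -> X -> C) : Prop :=
  [/\ (forall x, 0 <= ip x x), (forall x, ip x x = 0 -> x = 0),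
      (forall x y, ip x y = (ip y x)^*),
      (forall (a : C) x y, ip (a *: x) y = a * ip x y) &
      (forall x x' y, ip (x + x') y = ip x y + ip x' y)].

Definition hnorm (X : Type) (ip : X -> X -> C) (x : X) : R :=
  Num.sqrt (complex.Re (ip x x)).

Definition is_Hilbert (X : lmodType C) (ip : X -> X -> C) : Prop :=
  is_inner_product ip /\
  forall x : nat -> X,
    (forall eps, 0 < eps -> exists N, forall p q, (N <= p)%N -> (N <= q)%N ->
        hnorm ip (x p - x q) < eps) ->
    exists l : X, forall eps, 0 < eps -> exists N, forall p, (N <= p)%N ->
        hnorm ip (x p - l) < eps.

Definition is_linear_map (U W : lmodType C) (f : U -> W) : Prop :=
  forall (c : C) x y, f (c *: x + y) = c *: f x + f y.

(* (X, ipX, iota) is a Hilbert completion of H equipped with the semi-inner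
   product <x, y>_F = <x, y | a_2, ..., a_n> (i.e. of the inner product space
   H / {null vectors} ), iota being the canonical map H -> H_F. *)
Definition is_Hilbert_completion (n : nat) (V : lmodType C)
  (ip : V -> V -> ('I_n.-1 -> V) -> C) (a : 'I_n.-1 -> V)
  (X : lmodType C) (ipX : X -> X -> C) (iota : V -> X) : Prop :=
  [/\ is_Hilbert ipX, is_linear_map iota,
      (forall x y, ipX (iota x) (iota y) = ip x y a) &
      (forall (x : X) eps, 0 < eps -> exists v : V, hnorm ipX (x - iota v) < eps)].

Definition is_bounded (X : lmodType C) (ip : X -> X -> C) (T : X -> X) : Prop :=
  is_linear_map T /\ exists M : R, forall x, hnorm ip (T x) <= M * hnorm ip x.

Definition is_GB (X : lmodType C) (ip : X -> X -> C) (T : X -> X) : Prop :=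
  is_bounded ip T /\
  exists S : X -> X, [/\ is_bounded ip S, cancel T S & cancel S T].

Definition cframe (X : Type) (ip : X -> X -> C) (nrm : X -> R) (Cop : X -> X)
  (e : nat -> X) (A B : R) : Prop :=
  [/\ 0 < A, A <= B &
      forall x : X, exists s : C,
        series_to (fun i => ip x (e i) * ip (Cop (e i)) x) s /\
        (A * nrm x ^+ 2)%:C <= s /\ s <= (B * nrm x ^+ 2)%:C].

(* {f_i} is a Cop-controlled frame associated to (a_2,...,a_n) for H, where
   (X, ipX, iota) is the Hilbert space H_F; the norm of H_F is
   ||f, a_2, ..., a_n||_1 = sqrt <f, f>_{H_F}. *)
Definition controlled_frame (V X : lmodType C) (ipX : X -> X -> C)
  (iota : V -> X) (Cop : X -> X) (f : nat -> V) (A B : R) : Prop :=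
  cframe ipX (hnorm ipX) Cop (fun i => iota (f i)) A B.

Definition dsum_ip (X1 X2 : Type) (ip1 : X1 -> X1 -> C) (ip2 : X2 -> X2 -> C)
  (u v : X1 * X2) : C := ip1 u.1 v.1 + ip2 u.2 v.2.

Definition dsum_norm (X1 X2 : Type) (ip1 : X1 -> X1 -> C) (ip2 : X2 -> X2 -> C)
  (u : X1 * X2) : R := hnorm ip1 u.1 + hnorm ip2 u.2.

Definition dsum_op (X1 X2 : Type) (C1 : X1 -> X1) (C2 : X2 -> X2)
  (u : X1 * X2) : X1 * X2 := (C1 u.1, C2 u.2).

End Defs.

From HB Require Import structures.
From mathcomp Require Import all_boot all_order all_algebra perm.
From mathcomp Require Import reals complex.
From mathcomp Require Import ring.
Import Order.TTheory GRing.Theory Num.Theory.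
Local Open Scope ring_scope.
Local Open Scope complex_scope.
Set Implicit Arguments.

(** Expanding the direct-sum frame series gives the two given frame series
    plus the two cross series, which vanish by hypothesis; the frame bounds
    then follow from [(p + q)^2 / 2 <= p^2 + q^2 <= (p + q)^2] for the
    norms [p, q >= 0] of the two components. *)

Lemma series_toD (R : realType) (u v : nat -> R[i]) s t :
  series_to u s -> series_to v t -> series_to (fun i => u i + v i) (s + t).
Proof.
move=> hu hv eps eps_gt0.
have eps2_gt0 : 0 < eps / 2 by rewrite divr_gt0.
have [Nu Hu] := hu _ eps2_gt0; have [Nv Hv] := hv _ eps2_gt0.
exists (maxn Nu Nv) => m; rewrite geq_max => /andP[/Hu lt_u /Hv lt_v].
rewrite big_split /= opprD addrACA.
apply: le_lt_trans (ler_normD _ _) _.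
by rewrite [eps in eps%:C]splitr rmorphD ltrD.
Qed.

Lemma eq_series_to (R : realType) (u v : nat -> R[i]) s :
  u =1 v -> series_to u s -> series_to v s.
Proof.
move=> eq_uv hu eps eps_gt0; have [N HN] := hu _ eps_gt0.
by exists N => m /HN; under eq_bigr do rewrite eq_uv.
Qed.

Lemma hnorm_ge0 (R : realType) (X : Type) (ip : X -> X -> R[i]) (x : X) :
  0 <= hnorm ip x.
Proof. exact: sqrtr_ge0. Qed.

Lemma ler_minr_half_sqrD (R : realFieldType) (A C p q : R) :
  0 <= A -> 0 <= C ->
  Num.min A C / 2 * (p + q) ^+ 2 <= A * p ^+ 2 + C * q ^+ 2.
Proof.
move=> A_ge0 C_ge0; set m := Num.min A C.
have m_ge0 : 0 <= m by rewrite le_min A_ge0.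
have [mA mC] : m <= A /\ m <= C by rewrite !ge_min !lexx orbT.
have half_sqrD : (p + q) ^+ 2 / 2 <= p ^+ 2 + q ^+ 2.
  rewrite ler_pdivrMr // -subr_ge0.
  have -> : (p ^+ 2 + q ^+ 2) * 2 - (p + q) ^+ 2 = (p - q) ^+ 2 by ring.
  exact: sqr_ge0.
rewrite mulrAC -mulrA (le_trans (ler_wpM2l m_ge0 half_sqrD)) // mulrDr.
by rewrite lerD // ler_wpM2r // sqr_ge0.
Qed.

Lemma ler_maxr_sqrD (R : realFieldType) (B D p q : R) :
  0 <= B -> 0 <= p -> 0 <= q ->
  B * p ^+ 2 + D * q ^+ 2 <= Num.max B D * (p + q) ^+ 2.
Proof.
move=> B_ge0 p_ge0 q_ge0; set M := Num.max B D.
have [BM DM] : B <= M /\ D <= M by rewrite !le_max !lexx orbT.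
have M_ge0 : 0 <= M := le_trans B_ge0 BM.
have sqrD_ge : p ^+ 2 + q ^+ 2 <= (p + q) ^+ 2.
  rewrite -subr_ge0.
  have -> : (p + q) ^+ 2 - (p ^+ 2 + q ^+ 2) = p * q * 2 by ring.
  by rewrite !mulr_ge0.
rewrite (le_trans _ (ler_wpM2l M_ge0 sqrD_ge)) // mulrDr.
by rewrite lerD // ler_wpM2r // sqr_ge0.
Qed.

Section DirectSumFrame.

Variables (R : realType) (X1 X2 : Type).
Variables (ip1 : X1 -> X1 -> R[i]) (ip2 : X2 -> X2 -> R[i]).
Variables (C1 : X1 -> X1) (C2 : X2 -> X2) (e1 : nat -> X1) (e2 : nat -> X2).

Hypothesis cross12 : forall x y,
  series_to (fun i => ip1 x (e1 i) * ip2 (C2 (e2 i)) y) 0.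
Hypothesis cross21 : forall x y,
  series_to (fun i => ip2 y (e2 i) * ip1 (C1 (e1 i)) x) 0.

Lemma dsum_frame_series x y s1 s2 :
  series_to (fun i => ip1 x (e1 i) * ip1 (C1 (e1 i)) x) s1 ->
  series_to (fun i => ip2 y (e2 i) * ip2 (C2 (e2 i)) y) s2 ->
  series_to (fun i => dsum_ip ip1 ip2 (x, y) (e1 i, e2 i) *
                      dsum_ip ip1 ip2 (dsum_op C1 C2 (e1 i, e2 i)) (x, y)) (s1 + s2).
Proof.
move=> hs1 hs2; rewrite -[s1]addr0 -[s1 + 0]addr0.
apply: eq_series_to
  (series_toD (series_toD (series_toD hs1 (cross12 x y)) (cross21 x y)) hs2).
by move=> i; rewrite /dsum_ip /dsum_op /= mulrDl !mulrDr !addrA.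
Qed.

Lemma cframe_dsum A B C D :
  cframe ip1 (hnorm ip1) C1 e1 A B -> cframe ip2 (hnorm ip2) C2 e2 C D ->
  cframe (dsum_ip ip1 ip2) (dsum_norm ip1 ip2) (dsum_op C1 C2)
    (fun i => (e1 i, e2 i)) (Num.min A C / 2) (Num.max B D).
Proof.
case=> A_gt0 AB frame1 [C_gt0 CD frame2].
split.
- by rewrite divr_gt0 // lt_min A_gt0.
- have max_ge0 : 0 <= Num.max B D by rewrite le_max (le_trans (ltW A_gt0)).
  have min_le_max : Num.min A C <= Num.max B D by rewrite ge_min !le_max AB.
  by rewrite ler_pdivrMr // (le_trans min_le_max) // ler_peMr // ler1n.
move=> [x y]; have [s1 [hs1 [lo1 up1]]] := frame1 x.
have [s2 [hs2 [lo2 up2]]] := frame2 y.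
exists (s1 + s2); split; first exact: dsum_frame_series.
rewrite /dsum_norm /=; split.
- apply: le_trans (lerD lo1 lo2); rewrite -rmorphD lecR.
  by rewrite ler_minr_half_sqrD ?ltW.
- apply: le_trans (lerD up1 up2) _; rewrite -rmorphD lecR.
  by rewrite ler_maxr_sqrD ?hnorm_ge0 ?(le_trans (ltW A_gt0)).
Qed.

End DirectSumFrame.

(* Only the two frame inequalities and the cross conditions are needed. *)
Theorem theorem4p14 (R : realType) (n : nat) (hn : (2 <= n)%N)
  (H K : lmodType R[i])
  (ip1 : H -> H -> ('I_n.-1 -> H) -> R[i]) (ip2 : K -> K -> ('I_n.-1 -> K) -> R[i])
  (hH : is_n_Hilbert ip1) (hK : is_n_Hilbert ip2)
  (a : 'I_n.-1 -> H) (b : 'I_n.-1 -> K)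
  (HF : lmodType R[i]) (ipHF : HF -> HF -> R[i]) (iotaH : H -> HF)
  (hHF : is_Hilbert_completion ip1 a ipHF iotaH)
  (KG : lmodType R[i]) (ipKG : KG -> KG -> R[i]) (iotaK : K -> KG)
  (hKG : is_Hilbert_completion ip2 b ipKG iotaK)
  (C1 : HF -> HF) (C2 : KG -> KG) (hC1 : is_GB ipHF C1) (hC2 : is_GB ipKG C2)
  (f : nat -> H) (g : nat -> K) (A B C D : R)
  (hf : controlled_frame ipHF iotaH C1 f A B)
  (hg : controlled_frame ipKG iotaK C2 g C D)
  (hi : forall (x : HF) (y : KG),
     series_to (fun i => ipHF x (iotaH (f i)) * ipKG (C2 (iotaK (g i))) y) 0)
  (hii : forall (x : HF) (y : KG),
     series_to (fun i => ipKG y (iotaK (g i)) * ipHF (C1 (iotaH (f i))) x) 0) :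
  exists A' B' : R,
    cframe (dsum_ip ipHF ipKG) (dsum_norm ipHF ipKG) (dsum_op C1 C2)
      (fun i => (iotaH (f i), iotaK (g i))) A' B'.
Proof.
exists (Num.min A C / 2), (Num.max B D).
exact: (@cframe_dsum R HF KG ipHF ipKG C1 C2 (fun i => iotaH (f i))
  (fun i => iotaK (g i)) hi hii A B C D hf hg).
Qed.
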